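(* Let $K$ be the $2$-uniform tiling of the plane whose vertex types are $[3^4,6^1]$ and $[3^2,6^2]$. If $X$ is a map on the torus that is a quotient $X=K/\Gamma$ of $K$, then the vertices of $X$ form at most $3$ orbits under ${\rm Aut}(X)$.
   Context: A map is a polyhedral map: a cellular embedding of a connected graph in a closed surface such that the intersection of any two distinct faces is empty, a single vertex, or a single edge. For a vertex $u$, the faces containing $u$ form a cyclic sequence (the face-cycle at $u$); if this cyclic sequence consists of consecutive blocks of $n_1$ $p_1$-gons, then $n_2$ $p_2$-gons, ..., then $n_k$ $p_k$-gons, with cyclically consecutive $p_i$ distinct, then $u$ is said to have type $[p_1^{n_1},\dots,p_k^{n_k}]$ (defined up to cyclic shift and reversal). A $2$-uniform tiling is an edge-to-edge tiling of the Euclidean plane $\mathbb{R}^2$ by regular polygons whose symmetry group has exactly two orbits on the set of vertices; viewed as a map on the plane, its vertices have (at most) two types, listed as $[W;Z]$. (Up to isomorphism there are exactly $20$ such tilings; there is exactly one with the vertex types named in the claim.) For a map $K$ on the plane, a quotient of $K$ on the torus is a map $X$ on the torus together with a polyhedral covering map $\eta:K\to X$ with $X=K/\Gamma$, where $\Gamma\le {\rm Aut}(K)$ is a subgroup acting without fixed vertices, edges or faces and $K/\Gamma$ is homeomorphic to the torus. ${\rm Aut}(X)$ denotes the automorphism group of the map $X$, acting on its vertex set $V(X)$. *)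

From Stdlib Require Import ZArith List.
Import ListNotations.
Open Scope Z_scope.

(** Points are coordinates (i,j) of the triangular lattice, standing for
    i*e1 + j*e2 with e1 = (1,0), e2 = (1/2, sqrt 3 / 2) (a positively
    oriented basis).  K is obtained from the regular triangular tiling by
    deleting the lattice points of the sublattice
        S = { (i,j) | i = j mod 5 }
    and merging the six unit triangles around each deleted point into a
    regular hexagon.  Each remaining vertex has exactly one deleted
    neighbour (type [3^4,6^1]) or two deleted neighbours at angle 120 degrees
    (type [3^2,6^2]); the point reflection and the lattice translations show
    there are exactly two vertex orbits, so this is the (unique) 2-uniform
    tiling with these vertex types. *)

Definition pt := (Z * Z)%type.

Definition padd (p q : pt) : pt := (fst p + fst q, snd p + snd q).
Definition psub (p q : pt) : pt := (fst p - fst q, snd p - snd q).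

Definition dirs : list pt := [(1,0); (0,1); (-1,1); (-1,0); (0,-1); (1,-1)].

Definition V (p : pt) : Prop := (fst p - snd p) mod 5 <> 0.

Definition edge (x y : pt) : Prop := V x /\ V y /\ In (psub y x) dirs.

(** Faces of K, each given by its boundary vertex list in counterclockwise
    order: up-triangles, down-triangles (all of whose corners are vertices),
    and hexagons around the deleted points of S. *)
Definition face (l : list pt) : Prop :=
  (exists p, l = [p; padd p (1,0); padd p (0,1)] /\ Forall V l) \/
  (exists p, l = [padd p (1,0); padd p (1,1); padd p (0,1)] /\ Forall V l) \/
  (exists s, ~ V s /\ l = map (padd s) dirs).

Definition same_set (l1 l2 : list pt) : Prop := forall z, In z l1 <-> In z l2.

(** Automorphisms of the map K (given as functions on points; only their
    restriction to V matters): bijections of V preserving edges and faces. *)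
Definition IsAutK (g : pt -> pt) : Prop :=
  (forall x, V x -> V (g x)) /\
  (forall x y, V x -> V y -> g x = g y -> x = y) /\
  (forall y, V y -> exists x, V x /\ g x = y) /\
  (forall x y, V x -> V y -> (edge x y <-> edge (g x) (g y))) /\
  (forall l, face l -> exists l', face l' /\ same_set (map g l) l') /\
  (forall l', face l' -> exists l, face l /\ same_set (map g l) l').

Definition IsSubgroupAutK (Gam : (pt -> pt) -> Prop) : Prop :=
  (forall g, Gam g -> IsAutK g) /\
  Gam (fun x => x) /\
  (forall g h, Gam g -> Gam h -> Gam (fun x => g (h x))) /\
  (forall g, Gam g -> exists h, Gam h /\
       forall x, V x -> h (g x) = x /\ g (h x) = x).

Definition id_on_V (g : pt -> pt) : Prop := forall z, V z -> g z = z.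

Definition acts_freely (Gam : (pt -> pt) -> Prop) : Prop :=
  (forall g x, Gam g -> V x -> g x = x -> id_on_V g) /\
  (forall g x y, Gam g -> edge x y ->
      ((g x = x /\ g y = y) \/ (g x = y /\ g y = x)) -> id_on_V g) /\
  (forall g l, Gam g -> face l -> same_set (map g l) l -> id_on_V g).

(** The Gam-orbit relation on vertices (vertices of X = K/Gam). *)
Definition equivG (Gam : (pt -> pt) -> Prop) (x y : pt) : Prop :=
  exists g, Gam g /\ g x = y.

Definition edge_equivG (Gam : (pt -> pt) -> Prop) (e e' : pt * pt) : Prop :=
  exists g, Gam g /\
    ((g (fst e) = fst e' /\ g (snd e) = snd e') \/
     (g (fst e) = snd e' /\ g (snd e) = fst e')).

Definition face_equivG (Gam : (pt -> pt) -> Prop) (l l' : list pt) : Prop :=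
  exists g, Gam g /\ same_set (map g l) l'.

Definition orbit_count {A : Type} (P : A -> Prop) (eqv : A -> A -> Prop)
    (n : nat) : Prop :=
  exists l : list A, length l = n /\ Forall P l /\
    (forall i j a b, nth_error l i = Some a -> nth_error l j = Some b ->
        eqv a b -> i = j) /\
    (forall a, P a -> exists r, In r l /\ eqv r a).

(** Orientation of a triple of points (sign of a determinant in the
    positively oriented lattice basis). *)
Definition ccw (a b c : pt) : Prop :=
  let u := psub b a in let v := psub c a in
  fst u * snd v - snd u * fst v > 0.

(** K/Gam is homeomorphic to the torus: since Gam acts freely, K/Gam is a
    surface; we require it to be compact (finitely many vertex orbits),
    orientable (every element of Gam preserves the orientation of K) and of
    Euler characteristic 0 (#V - #E + #F = 0); by the classification of
    surfaces this is exactly the torus. *)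
Definition quotient_is_torus (Gam : (pt -> pt) -> Prop) : Prop :=
  (exists reps : list pt, forall x, V x -> exists r, In r reps /\ equivG Gam r x) /\
  (forall g a b c, Gam g -> face [a; b; c] -> ccw a b c -> ccw (g a) (g b) (g c)) /\
  (exists nV nE nF,
      orbit_count V (equivG Gam) nV /\
      orbit_count (fun e => edge (fst e) (snd e)) (edge_equivG Gam) nE /\
      orbit_count face (face_equivG Gam) nF /\
      (nV + nF = nE)%nat).

Definition onX (Gam : (pt -> pt) -> Prop) (l : list pt) (z : pt) : Prop :=
  exists x, In x l /\ equivG Gam x z.

(** K/Gam is a polyhedral map: its graph is simple, its faces are polygons
    (no two vertices of a face are identified), and any two distinct faces
    meet in nothing, in a single vertex, or in a single edge. *)
Definition quotient_is_polyhedral (Gam : (pt -> pt) -> Prop) : Prop :=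
  (forall x y, edge x y -> ~ equivG Gam x y) /\
  (forall x y x' y', edge x y -> edge x' y' -> equivG Gam x x' -> equivG Gam y y' ->
      edge_equivG Gam (x, y) (x', y')) /\
  (forall l x y, face l -> In x l -> In y l -> equivG Gam x y -> x = y) /\
  (forall l1 l2, face l1 -> face l2 -> ~ face_equivG Gam l1 l2 ->
     (forall z, ~ (onX Gam l1 z /\ onX Gam l2 z)) \/
     (exists x, V x /\ forall z, (onX Gam l1 z /\ onX Gam l2 z) <-> equivG Gam x z) \/
     (exists x y, edge x y /\ In x l1 /\ In y l1 /\
        (exists g, Gam g /\ In (g x) l2 /\ In (g y) l2) /\
        forall z, (onX Gam l1 z /\ onX Gam l2 z) <->
                  (equivG Gam x z \/ equivG Gam y z))).

Definition edgeX (Gam : (pt -> pt) -> Prop) (x y : pt) : Prop :=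
  exists x' y', equivG Gam x x' /\ equivG Gam y y' /\ edge x' y'.

Definition sameX (Gam : (pt -> pt) -> Prop) (l1 l2 : list pt) : Prop :=
  forall z, onX Gam l1 z <-> onX Gam l2 z.

(** Automorphisms of the map X = K/Gam, represented by functions on points
    compatible with the orbit relation: they induce bijections of V(X)
    preserving the edges and the faces of X. *)
Definition IsAutX (Gam : (pt -> pt) -> Prop) (phi : pt -> pt) : Prop :=
  (forall x, V x -> V (phi x)) /\
  (forall x y, V x -> V y -> equivG Gam x y -> equivG Gam (phi x) (phi y)) /\
  (forall x y, V x -> V y -> equivG Gam (phi x) (phi y) -> equivG Gam x y) /\
  (forall y, V y -> exists x, V x /\ equivG Gam (phi x) y) /\
  (forall x y, V x -> V y -> (edgeX Gam x y <-> edgeX Gam (phi x) (phi y))) /\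
  (forall l, face l -> exists l', face l' /\ sameX Gam (map phi l) l') /\
  (forall l', face l' -> exists l, face l /\ sameX Gam (map phi l) l').

(* Every element of [Gam] maps the triangles of [K] to triangles and, because [K/Gam] is
   orientable, preserves their orientation.  Consecutive neighbours of a vertex span
   triangles, except across a hexagon; at a vertex of type [3^2,6^2] the edge between the
   two hexagons lies in no triangle, and this must be preserved too.  Hence each element
   turns all edges at a vertex by one common angle, and walking through the plane shows it
   is a rigid motion [x |-> rot k x + u] of the lattice.  A proper rotation of the lattice
   has its centre at a vertex, at the centre of a hexagon or of a triangle, or at the
   midpoint of an edge, so freeness forces [Gam] to consist of translations.  Translations
   by the holes commute with [Gam], and the point reflection conjugates it to itself, so
   they induce automorphisms of [X]; these alone have two orbits on the vertices of [X],
   represented by [(1,0)] and [(2,0)]. *)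

From Stdlib Require Import ZArith List Lia.
Import ListNotations.
Open Scope Z_scope.

Ltac lia_mod := Z.div_mod_to_equations; lia.

Ltac inj_pairs :=
  repeat match goal with H : (_, _) = (_, _) |- _ => injection H; clear H; intros end.

Lemma padd_psub x y : y = padd x (psub y x).
Proof. destruct x, y; unfold padd, psub; simpl; f_equal; lia. Qed.

Lemma psub_padd x d : psub (padd x d) x = d.
Proof. destruct x, d; unfold padd, psub; simpl; f_equal; lia. Qed.

Lemma padd_inj p d d' : padd p d = padd p d' -> d = d'.
Proof. destruct p, d, d'; unfold padd; simpl; intro H; inj_pairs; f_equal; lia. Qed.

Lemma padd_AC a b c : padd (padd a b) c = padd (padd a c) b.
Proof. destruct a, b, c; unfold padd; simpl; f_equal; lia. Qed.

(* [dir i] is the unit vector at angle [60 i] degrees, so [dir (i + 1)] is the next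
   direction counterclockwise and [dir] only depends on [i mod 6]. *)
Definition dir (i : Z) : pt :=
  match i mod 6 with
  | 0 => (1,0) | 1 => (0,1) | 2 => (-1,1) | 3 => (-1,0) | 4 => (0,-1) | _ => (1,-1)
  end.

Lemma mod6_cases i :
  i mod 6 = 0 \/ i mod 6 = 1 \/ i mod 6 = 2 \/ i mod 6 = 3 \/ i mod 6 = 4 \/ i mod 6 = 5.
Proof. lia_mod. Qed.

Lemma dir_spec i :
  (i mod 6 = 0 /\ dir i = (1,0)) \/ (i mod 6 = 1 /\ dir i = (0,1)) \/
  (i mod 6 = 2 /\ dir i = (-1,1)) \/ (i mod 6 = 3 /\ dir i = (-1,0)) \/
  (i mod 6 = 4 /\ dir i = (0,-1)) \/ (i mod 6 = 5 /\ dir i = (1,-1)).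
Proof. unfold dir; destruct (mod6_cases i) as [H|[H|[H|[H|[H|H]]]]]; rewrite H; tauto. Qed.

Ltac case_dir e :=
  let H := fresh "Hm" in let Hd := fresh "Hd" in
  destruct (dir_spec e) as [[H Hd]|[[H Hd]|[[H Hd]|[[H Hd]|[[H Hd]|[H Hd]]]]]];
  try rewrite Hd in *; clear Hd; try (exfalso; lia_mod).

Lemma dir_congr i j : i mod 6 = j mod 6 -> dir i = dir j.
Proof. intro H; unfold dir; rewrite H; reflexivity. Qed.

Lemma dir_inj i j : dir i = dir j -> i mod 6 = j mod 6.
Proof. intro H. case_dir i; case_dir j; try lia_mod; discriminate. Qed.

Lemma dir_in_dirs i : In (dir i) dirs.
Proof. case_dir i; simpl; tauto. Qed.

Lemma in_dirs_dir d : In d dirs -> exists i, d = dir i.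
Proof.
  simpl; intros [H|[H|[H|[H|[H|[H|H]]]]]]; subst;
  [exists 0|exists 1|exists 2|exists 3|exists 4|exists 5|contradiction]; reflexivity.
Qed.

Lemma in_hexagon c z : In z (map (padd c) dirs) <-> exists j, z = padd c (dir j).
Proof.
  rewrite in_map_iff. split.
  - intros [d [<- Hd]]. destruct (in_dirs_dir d Hd) as [j ->]. eauto.
  - intros [j ->]. exists (dir j). split; auto. apply dir_in_dirs.
Qed.

Lemma padd_dir_neq w j : w <> padd w (dir j).
Proof. destruct w. case_dir j; unfold padd; simpl; intro H; inj_pairs; lia. Qed.

Lemma padd_dir_inj w i j : padd w (dir i) = padd w (dir j) -> i mod 6 = j mod 6.
Proof. intro H. apply dir_inj, (padd_inj w), H. Qed.

Lemma padd_dir_opp x i : padd (padd x (dir i)) (dir (i + 3)) = x.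
Proof. destruct x. case_dir i; case_dir (i + 3); unfold padd; simpl; f_equal; lia. Qed.

Lemma padd_dir_next s i : padd (padd s (dir i)) (dir (i + 2)) = padd s (dir (i + 1)).
Proof.
  destruct s. case_dir i; case_dir (i + 1); case_dir (i + 2); unfold padd; simpl; f_equal; lia.
Qed.

Lemma padd_dir_prev s i : padd (padd s (dir (i + 1))) (dir (i + 5)) = padd s (dir i).
Proof.
  destruct s. case_dir i; case_dir (i + 1); case_dir (i + 5); unfold padd; simpl; f_equal; lia.
Qed.

Definition rot (k : Z) (p : pt) : pt :=
  let (a, b) := p in
  match k mod 6 with
  | 0 => (a, b) | 1 => (-b, a + b) | 2 => (-a - b, a) | 3 => (-a, -b)
  | 4 => (b, -a - b) | _ => (a + b, -a)
  end.

Lemma rot_spec k a b :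
  (k mod 6 = 0 /\ rot k (a,b) = (a,b)) \/ (k mod 6 = 1 /\ rot k (a,b) = (-b,a+b)) \/
  (k mod 6 = 2 /\ rot k (a,b) = (-a-b,a)) \/ (k mod 6 = 3 /\ rot k (a,b) = (-a,-b)) \/
  (k mod 6 = 4 /\ rot k (a,b) = (b,-a-b)) \/ (k mod 6 = 5 /\ rot k (a,b) = (a+b,-a)).
Proof. unfold rot; destruct (mod6_cases k) as [H|[H|[H|[H|[H|H]]]]]; rewrite H; tauto. Qed.

Lemma rot_padd_dir k p i : rot k (padd p (dir i)) = padd (rot k p) (dir (i + k)).
Proof.
  destruct p as [a b].
  destruct (rot_spec k a b) as [[H E]|[[H E]|[[H E]|[[H E]|[[H E]|[H E]]]]]];
  unfold rot in *; rewrite H in *; case_dir i; case_dir (i + k); unfold padd; simpl; f_equal; lia.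
Qed.

Definition motion (k : Z) (u p : pt) : pt := padd (rot k p) u.

Lemma motion_padd_dir k u x i : motion k u (padd x (dir i)) = padd (motion k u x) (dir (i + k)).
Proof. unfold motion. rewrite rot_padd_dir. apply padd_AC. Qed.

Lemma V_dec p : V p \/ ~ V p.
Proof. unfold V. destruct (Z.eq_dec ((fst p - snd p) mod 5) 0); auto. Qed.

Lemma V_hole_nbr s j : ~ V s -> V (padd s (dir j)).
Proof. destruct s. unfold V; simpl. intro H. case_dir j; simpl; lia_mod. Qed.

Lemma face_V l t : face l -> In t l -> V t.
Proof.
  intros [[p [-> HF]]|[[p [-> HF]]|[s [Hs ->]]]] Ht.
  1,2: rewrite Forall_forall in HF; auto.
  apply in_hexagon in Ht as [j ->]. apply V_hole_nbr; auto.
Qed.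

Definition cyclic3 (A B C P Q R : pt) : Prop :=
  (A = P /\ B = Q /\ C = R) \/ (A = Q /\ B = R /\ C = P) \/ (A = R /\ B = P /\ C = Q).

Lemma cyclic3_same_set A B C P Q R : cyclic3 A B C P Q R -> same_set [P; Q; R] [A; B; C].
Proof. intros [[-> [-> ->]]|[[-> [-> ->]]|[-> [-> ->]]]] z; simpl; tauto. Qed.

Lemma tri_face w j : V w -> V (padd w (dir j)) -> V (padd w (dir (j + 1))) ->
  exists A B C, face [A; B; C] /\ ccw A B C /\
    cyclic3 A B C w (padd w (dir j)) (padd w (dir (j + 1))).
Proof.
  destruct w as [w1 w2]; intros H0 H1 H2.
  case_dir j; case_dir (j + 1); unfold padd in *; simpl in *.
  - exists (w1,w2), (w1+1,w2+0), (w1+0,w2+1).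
    split; [left; exists (w1,w2); split; [reflexivity|]|split].
    + repeat constructor; unfold V in *; simpl in *; lia_mod.
    + unfold ccw, psub; simpl; lia.
    + left; repeat split; f_equal; lia.
  - exists (w1-1+1,w2+0), (w1-1+1,w2+1), (w1-1+0,w2+1).
    split; [right; left; exists (w1-1,w2); split; [reflexivity|]|split].
    + repeat constructor; unfold V in *; simpl in *; lia_mod.
    + unfold ccw, psub; simpl; lia.
    + left; repeat split; f_equal; lia.
  - exists (w1-1,w2), (w1-1+1,w2+0), (w1-1+0,w2+1).
    split; [left; exists (w1-1,w2); split; [reflexivity|]|split].
    + repeat constructor; unfold V in *; simpl in *; lia_mod.
    + unfold ccw, psub; simpl; lia.
    + right; right; repeat split; f_equal; lia.
  - exists (w1-1+1,w2-1+0), (w1-1+1,w2-1+1), (w1-1+0,w2-1+1).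
    split; [right; left; exists (w1-1,w2-1); split; [reflexivity|]|split].
    + repeat constructor; unfold V in *; simpl in *; lia_mod.
    + unfold ccw, psub; simpl; lia.
    + right; right; repeat split; f_equal; lia.
  - exists (w1,w2-1), (w1+1,w2-1+0), (w1+0,w2-1+1).
    split; [left; exists (w1,w2-1); split; [reflexivity|]|split].
    + repeat constructor; unfold V in *; simpl in *; lia_mod.
    + unfold ccw, psub; simpl; lia.
    + right; left; repeat split; f_equal; lia.
  - exists (w1+1,w2-1+0), (w1+1,w2-1+1), (w1+0,w2-1+1).
    split; [right; left; exists (w1,w2-1); split; [reflexivity|]|split].
    + repeat constructor; unfold V in *; simpl in *; lia_mod.
    + unfold ccw, psub; simpl; lia.
    + right; left; repeat split; f_equal; lia.
Qed.

Lemma tri_face_same_set w j : V w -> V (padd w (dir j)) -> V (padd w (dir (j + 1))) ->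
  exists l, face l /\ same_set [w; padd w (dir j); padd w (dir (j + 1))] l.
Proof.
  intros H0 H1 H2. destruct (tri_face w j H0 H1 H2) as [A [B [C [Hf [_ Hc]]]]].
  exists [A; B; C]. split; auto. apply cyclic3_same_set; auto.
Qed.

Lemma in3 {A} (x P Q R : A) : In x [P; Q; R] -> P = x \/ Q = x \/ R = x.
Proof. simpl; tauto. Qed.

Lemma pigeonhole3 (x0 x1 x2 x3 P Q R : pt) :
  In x0 [P; Q; R] -> In x1 [P; Q; R] -> In x2 [P; Q; R] -> In x3 [P; Q; R] ->
  x0 = x1 \/ x0 = x2 \/ x0 = x3 \/ x1 = x2 \/ x1 = x3 \/ x2 = x3.
Proof.
  intros H0 H1 H2 H3; apply in3 in H0, H1, H2, H3.
  destruct H0 as [H0|[H0|H0]]; destruct H1 as [H1|[H1|H1]]; destruct H2 as [H2|[H2|H2]];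
  destruct H3 as [H3|[H3|H3]]; subst; auto 7.
Qed.

Lemma hexagon_not_triangle (f : pt -> pt) s P Q R :
  ~ V s -> (forall x y, V x -> V y -> f x = f y -> x = y) ->
  (forall j, In (f (padd s (dir j))) [P; Q; R]) -> False.
Proof.
  destruct s as [s1 s2]. intros Hs Hf Hin.
  destruct (pigeonhole3 _ _ _ _ _ _ _ (Hin 0) (Hin 1) (Hin 2) (Hin 3)) as [E|[E|[E|[E|[E|E]]]]];
  apply Hf in E; try (apply V_hole_nbr; auto); unfold padd, dir in E; simpl in E; inj_pairs; lia.
Qed.

Ltac solve_dir_witness := first
  [ exists 0; unfold dir; simpl; split; f_equal; lia
  | exists 1; unfold dir; simpl; split; f_equal; lia
  | exists 2; unfold dir; simpl; split; f_equal; lia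
  | exists 3; unfold dir; simpl; split; f_equal; lia
  | exists 4; unfold dir; simpl; split; f_equal; lia
  | exists 5; unfold dir; simpl; split; f_equal; lia ].

Lemma face_ccw_triangle P Q R l : face l -> same_set [P; Q; R] l ->
  P <> Q -> Q <> R -> P <> R -> ccw P Q R ->
  exists a, Q = padd P (dir a) /\ R = padd P (dir (a + 1)).
Proof.
  intros Hf Hs HPQ HQR HPR Hc.
  assert (HP : In P l) by (apply Hs; simpl; tauto).
  assert (HQ : In Q l) by (apply Hs; simpl; tauto).
  assert (HR : In R l) by (apply Hs; simpl; tauto).
  destruct Hf as [[[q1 q2] [-> _]]|[[[q1 q2] [-> _]]|[s [Hsv ->]]]].
  1,2: simpl in HP, HQ, HR;
    destruct HP as [<-|[<-|[<-|[]]]]; destruct HQ as [<-|[<-|[<-|[]]]];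
    destruct HR as [<-|[<-|[<-|[]]]];
    try congruence; unfold padd, ccw, psub in *; simpl in *; try lia; solve_dir_witness.
  exfalso. apply (hexagon_not_triangle (fun x => x) s P Q R); auto.
  intro j. apply Hs. apply in_hexagon. eauto.
Qed.

Lemma ccw_triangle_rotate P Q R a : Q = padd P (dir a) -> R = padd P (dir (a + 1)) ->
  R = padd Q (dir (a + 2)) /\ P = padd Q (dir (a + 2 + 1)).
Proof.
  intros -> ->. destruct P as [p1 p2].
  case_dir a; case_dir (a + 1); case_dir (a + 2); case_dir (a + 2 + 1);
  unfold padd; simpl; split; f_equal; lia.
Qed.

Lemma isolated_edge_not_in_triangle y i P Q R :
  ~ V (padd y (dir (i - 1))) -> ~ V (padd y (dir (i + 1))) -> face [P; Q; R] ->
  In y [P; Q; R] -> In (padd y (dir i)) [P; Q; R] -> False.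
Proof.
  intros N1 N2 Hf HA HB.
  destruct Hf as [[[q1 q2] [E HF]]|[[[q1 q2] [E HF]]|[s [_ E]]]]; [| |discriminate E].
  all: rewrite E in HA, HB, HF; rewrite Forall_forall in HF;
    assert (V1 := HF _ (or_introl eq_refl));
    assert (V2 := HF _ (or_intror (or_introl eq_refl)));
    assert (V3 := HF _ (or_intror (or_intror (or_introl eq_refl))));
    destruct y as [y1 y2]; case_dir i; case_dir (i - 1); case_dir (i + 1);
    unfold padd in *; simpl in *;
    destruct HA as [HA|[HA|[HA|[]]]]; destruct HB as [HB|[HB|[HB|[]]]]; inj_pairs;
    unfold V in *; simpl in *; lia_mod.
Qed.

Lemma dir_between_holes w a b :
  ~ V (padd w (dir (a - 1))) -> ~ V (padd w (dir (a + 1))) ->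
  V (padd w (dir b)) -> V (padd w (dir (b + 1))) -> V (padd w (dir (b + 2))) ->
  a mod 6 = (b + 4) mod 6.
Proof.
  intros N1 N2 P0 P1 P2.
  assert (H : (a-1) mod 6 = b mod 6 \/ (a-1) mod 6 = (b+1) mod 6 \/ (a-1) mod 6 = (b+2) mod 6 \/
              (a+1) mod 6 = b mod 6 \/ (a+1) mod 6 = (b+1) mod 6 \/ (a+1) mod 6 = (b+2) mod 6 \/
              a mod 6 = (b+4) mod 6) by lia_mod.
  destruct H as [H|[H|[H|[H|[H|[H|H]]]]]]; auto; exfalso; rewrite (dir_congr _ _ H) in *; auto.
Qed.

(** * Orientation-preserving automorphisms are rigid motions *)

Record OrientedAutK (g : pt -> pt) : Prop := {
  aut_V : forall x, V x -> V (g x);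
  aut_inj : forall x y, V x -> V y -> g x = g y -> x = y;
  aut_edge : forall x y, edge x y -> edge (g x) (g y);
  aut_face : forall l, face l -> exists l', face l' /\ same_set (map g l) l';
  aut_face_preimage : forall l', face l' -> exists l, face l /\ same_set (map g l) l';
  aut_ccw : forall a b c, face [a; b; c] -> ccw a b c -> ccw (g a) (g b) (g c) }.

Section OrientedAut.

Variable g : pt -> pt.
Hypothesis Hg : OrientedAutK g.

Lemma in_map_aut l y : face l -> V y -> In (g y) (map g l) -> In y l.
Proof.
  intros Hf Hy Hin. apply in_map_iff in Hin as [t [Ht Hin]].
  assert (t = y) as <- by (apply (aut_inj g Hg); auto; apply (face_V l); auto). auto.
Qed.

Lemma aut_nbr x i : V x -> V (padd x (dir i)) -> exists a, g (padd x (dir i)) = padd (g x) (dir a).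
Proof.
  intros Hx Hy.
  assert (He : edge x (padd x (dir i))) by (split; [|split]; auto; rewrite psub_padd; apply dir_in_dirs).
  destruct (aut_edge g Hg _ _ He) as [_ [_ Hin]].
  destruct (in_dirs_dir _ Hin) as [a Ha]. exists a. rewrite <- Ha. apply padd_psub.
Qed.

(* [g] maps the positively oriented triangle at [w] to a positively oriented triangle. *)
Lemma aut_fan w j : V w -> V (padd w (dir j)) -> V (padd w (dir (j + 1))) ->
  exists a, g (padd w (dir j)) = padd (g w) (dir a) /\
            g (padd w (dir (j + 1))) = padd (g w) (dir (a + 1)).
Proof.
  intros H0 H1 H2.
  destruct (tri_face w j H0 H1 H2) as [A [B [C [Hf [Hc Hcy]]]]].
  destruct (aut_face g Hg _ Hf) as [l' [Hf' Hs]].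
  assert (HV : V A /\ V B /\ V C) by (split; [|split]; apply (face_V _ _ Hf); simpl; tauto).
  assert (Hd1 := padd_dir_neq w j). assert (Hd2 := padd_dir_neq w (j + 1)).
  assert (Hd3 : padd w (dir j) <> padd w (dir (j + 1))) by (intro E; apply padd_dir_inj in E; lia_mod).
  assert (Hdist : A <> B /\ B <> C /\ A <> C)
    by (destruct Hcy as [[-> [-> ->]]|[[-> [-> ->]]|[-> [-> ->]]]]; repeat split; congruence).
  destruct HV as [VA [VB VC]]. destruct Hdist as [HAB [HBC HAC]].
  destruct (face_ccw_triangle (g A) (g B) (g C) l' Hf' Hs) as [a [Ha1 Ha2]];
    try (intro E; apply (aut_inj g Hg) in E; auto); try apply (aut_ccw g Hg); auto.
  destruct Hcy as [[-> [-> ->]]|[[-> [-> ->]]|[-> [-> ->]]]].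
  - exists a; auto.
  - destruct (ccw_triangle_rotate _ _ _ _ Ha1 Ha2) as [Hb1 Hb2].
    destruct (ccw_triangle_rotate _ _ _ _ Hb1 Hb2) as [Hc1 Hc2].
    exists (a + 2 + 2). auto.
  - destruct (ccw_triangle_rotate _ _ _ _ Ha1 Ha2) as [Hb1 Hb2].
    exists (a + 2). auto.
Qed.

Definition turns_at (y : pt) (t i : Z) : Prop :=
  g (padd y (dir i)) = padd (g y) (dir (i + t)).

Lemma turns_at_congr y t i i' : i mod 6 = i' mod 6 -> turns_at y t i -> turns_at y t i'.
Proof.
  unfold turns_at; intros H E. rewrite <- (dir_congr i i'), E by auto.
  f_equal; apply dir_congr; lia_mod.
Qed.

Lemma turns_at_unique y t t' i : turns_at y t i -> turns_at y t' i -> t mod 6 = t' mod 6.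
Proof. unfold turns_at; intros E E'. rewrite E in E'. apply padd_dir_inj in E'. lia_mod. Qed.

Lemma aut_turns_at y i : V y -> V (padd y (dir i)) -> exists t, turns_at y t i.
Proof.
  intros Hy Hi. destruct (aut_nbr y i Hy Hi) as [a Ha]. exists (a - i).
  unfold turns_at. rewrite Ha. do 2 f_equal. lia.
Qed.

Lemma aut_turns_at_next y t i : V y -> V (padd y (dir i)) -> V (padd y (dir (i + 1))) ->
  turns_at y t i -> turns_at y t (i + 1).
Proof.
  intros H0 H1 H2 Ht. destruct (aut_fan y i H0 H1 H2) as [a [Ha Ha']].
  unfold turns_at in *. rewrite Ha'. f_equal. apply dir_congr.
  rewrite Ha in Ht. apply padd_dir_inj in Ht. lia_mod.
Qed.

(* An edge lying in no triangle of [K] is mapped to an edge lying in no triangle. *)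
Lemma aut_isolated_edge y i a : V y -> V (padd y (dir i)) ->
  ~ V (padd y (dir (i - 1))) -> ~ V (padd y (dir (i + 1))) ->
  g (padd y (dir i)) = padd (g y) (dir a) ->
  ~ V (padd (g y) (dir (a - 1))) /\ ~ V (padd (g y) (dir (a + 1))).
Proof.
  intros Hy Hz N1 N2 Ha.
  assert (no_tri : forall A B C, face [A; B; C] -> In (g y) [A; B; C] ->
                     In (g (padd y (dir i))) [A; B; C] -> False).
  { intros A B C Hf HA HB. pose proof (aut_face_preimage g Hg _ Hf) as [l [Hl Hs]].
    apply Hs, (in_map_aut l) in HA, HB; auto.
    assert (Hl' := Hl).
    destruct Hl as [[p [El _]]|[[p [El _]]|[s [Hsv El]]]].
    1,2: rewrite El in Hl', HA, HB; exact (isolated_edge_not_in_triangle _ _ _ _ _ N1 N2 Hl' HA HB).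
    apply (hexagon_not_triangle g s A B C Hsv (aut_inj g Hg)).
    intro j. apply Hs, in_map. rewrite El. apply in_hexagon. eauto. }
  assert (Vgy : V (g y)) by (apply (aut_V g Hg); auto).
  assert (Vgz : V (padd (g y) (dir a))) by (rewrite <- Ha; apply (aut_V g Hg); auto).
  split; intro HW.
  - assert (Vgz' : V (padd (g y) (dir (a - 1 + 1)))) by (rewrite (dir_congr _ a) by lia_mod; auto).
    destruct (tri_face (g y) (a - 1) Vgy HW Vgz') as [A [B [C [Hf [_ Hc]]]]].
    rewrite (dir_congr (a - 1 + 1) a) in Hc by lia_mod.
    apply (no_tri A B C Hf); apply (cyclic3_same_set _ _ _ _ _ _ Hc); rewrite ?Ha; simpl; tauto.
  - destruct (tri_face (g y) a Vgy Vgz HW) as [A [B [C [Hf [_ Hc]]]]].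
    apply (no_tri A B C Hf); apply (cyclic3_same_set _ _ _ _ _ _ Hc); rewrite ?Ha; simpl; tauto.
Qed.

Lemma aut_turns_at_chain y t j (n : nat) : V y ->
  (forall m, (m <= n)%nat -> V (padd y (dir (j + Z.of_nat m)))) -> turns_at y t j ->
  forall m, (m <= n)%nat -> turns_at y t (j + Z.of_nat m).
Proof.
  intros Hy Hnb T0 m. induction m as [|m IH]; intro Hm.
  - rewrite Z.add_0_r; auto.
  - replace (j + Z.of_nat (S m)) with (j + Z.of_nat m + 1) in * by lia.
    apply aut_turns_at_next; auto.
    + apply Hnb; lia.
    + replace (j + Z.of_nat m + 1) with (j + Z.of_nat (S m)) by lia. apply Hnb; lia.
    + apply IH; lia.
Qed.

(* At a vertex of type [3^4,6] the five neighbours form a chain of four triangles. *)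
Lemma aut_turns_type_3_4_6 y j : V y ->
  (forall m, (m <= 4)%nat -> V (padd y (dir (j + Z.of_nat m)))) -> ~ V (padd y (dir (j + 5))) ->
  exists t, forall i, V (padd y (dir i)) -> turns_at y t i.
Proof.
  intros Hy Hnb Hhole.
  assert (H0 := Hnb 0%nat ltac:(lia)); change (Z.of_nat 0) with 0 in H0; rewrite Z.add_0_r in H0.
  destruct (aut_turns_at y j Hy H0) as [t T0].
  exists t. intros i Hi.
  assert (Hm : i mod 6 = (j + Z.of_nat (Z.to_nat ((i - j) mod 6))) mod 6)
    by (rewrite Z2Nat.id; lia_mod).
  apply (turns_at_congr _ _ _ _ (eq_sym Hm)), (aut_turns_at_chain y t j 4); auto.
  destruct (Z.eq_dec ((i - j) mod 6) 5) as [E|E].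
  - exfalso. apply Hhole. rewrite (dir_congr _ i); auto. lia_mod.
  - lia_mod.
Qed.

(* At a vertex of type [3^2,6^2] three neighbours form a chain of two triangles, and the
   fourth one spans an edge between the two hexagons. *)
Lemma aut_turns_type_3_2_6_2 y j : V y ->
  (forall m, (m <= 2)%nat -> V (padd y (dir (j + Z.of_nat m)))) -> V (padd y (dir (j + 4))) ->
  ~ V (padd y (dir (j + 3))) -> ~ V (padd y (dir (j + 5))) ->
  exists t, forall i, V (padd y (dir i)) -> turns_at y t i.
Proof.
  intros Hy Hnb Hiso H3 H5.
  assert (H0 := Hnb 0%nat ltac:(lia)); change (Z.of_nat 0) with 0 in H0; rewrite Z.add_0_r in H0.
  destruct (aut_turns_at y j Hy H0) as [t T0].
  assert (Tm := aut_turns_at_chain y t j 2 Hy Hnb T0).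
  destruct (aut_nbr y (j + 4) Hy Hiso) as [a Ha].
  destruct (aut_isolated_edge y (j + 4) a Hy Hiso) as [N1 N2]; auto.
  { rewrite (dir_congr _ (j + 3)); auto. lia_mod. }
  { rewrite (dir_congr _ (j + 5)); auto. lia_mod. }
  assert (Img : forall m, (m <= 2)%nat -> V (padd (g y) (dir (j + t + Z.of_nat m)))).
  { intros m Hm. rewrite (dir_congr _ (j + Z.of_nat m + t)) by lia_mod.
    rewrite <- (Tm m Hm). apply (aut_V g Hg), Hnb, Hm. }
  assert (Hiso_t : turns_at y t (j + 4)).
  { unfold turns_at. rewrite Ha. f_equal. apply dir_congr.
    rewrite (dir_between_holes (g y) a (j + t)); auto; [lia_mod|..].
    - rewrite (dir_congr _ (j + t + Z.of_nat 0)) by lia_mod. apply Img; lia.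
    - rewrite (dir_congr _ (j + t + Z.of_nat 1)) by lia_mod. apply Img; lia.
    - rewrite (dir_congr _ (j + t + Z.of_nat 2)) by lia_mod. apply Img; lia. }
  exists t. intros i Hi.
  assert (Hc : i mod 6 = j mod 6 \/ i mod 6 = (j + 1) mod 6 \/ i mod 6 = (j + 2) mod 6 \/
               i mod 6 = (j + 3) mod 6 \/ i mod 6 = (j + 4) mod 6 \/ i mod 6 = (j + 5) mod 6)
    by lia_mod.
  destruct Hc as [E|[E|[E|[E|[E|E]]]]]; try (exfalso; rewrite (dir_congr i _ E) in Hi; auto; fail).
  - apply (turns_at_congr _ _ j); [lia_mod|]. auto.
  - apply (turns_at_congr _ _ (j + Z.of_nat 1)); [lia_mod|]. apply Tm; lia.
  - apply (turns_at_congr _ _ (j + Z.of_nat 2)); [lia_mod|]. apply Tm; lia.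
  - apply (turns_at_congr _ _ (j + 4)); [lia_mod|]. auto.
Qed.

Ltac V_nbr := unfold V, padd, dir; simpl; lia_mod.

Lemma aut_local_turn y : V y -> exists t, forall i, V (padd y (dir i)) -> turns_at y t i.
Proof.
  intro Hy. destruct y as [y1 y2].
  assert (Hc : (y1 - y2) mod 5 = 1 \/ (y1 - y2) mod 5 = 2 \/ (y1 - y2) mod 5 = 3 \/
               (y1 - y2) mod 5 = 4) by (unfold V in Hy; simpl in Hy; lia_mod).
  destruct Hc as [Hc|[Hc|[Hc|Hc]]].
  - apply (aut_turns_type_3_2_6_2 _ 4); auto; try V_nbr.
    intros [|[|[|m]]] Hm; try lia; V_nbr.
  - apply (aut_turns_type_3_4_6 _ 3); auto; try V_nbr.
    intros [|[|[|[|[|m]]]]] Hm; try lia; V_nbr.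
  - apply (aut_turns_type_3_4_6 _ 0); auto; try V_nbr.
    intros [|[|[|[|[|m]]]]] Hm; try lia; V_nbr.
  - apply (aut_turns_type_3_2_6_2 _ 1); auto; try V_nbr.
    intros [|[|[|m]]] Hm; try lia; V_nbr.
Qed.

Lemma turns_at_all y k i0 : V y -> V (padd y (dir i0)) -> turns_at y k i0 ->
  forall i, V (padd y (dir i)) -> turns_at y k i.
Proof.
  intros Hy H0 E0 i Hi. destruct (aut_local_turn y Hy) as [t Ht].
  assert (Hkt := turns_at_unique y k t i0 E0 (Ht i0 H0)).
  unfold turns_at. rewrite (Ht i Hi). f_equal. apply dir_congr. lia_mod.
Qed.

Definition agrees_at (k : Z) (u x : pt) : Prop :=
  g x = motion k u x /\ forall i, V (padd x (dir i)) -> turns_at x k i.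

Lemma agrees_at_nbr k u x i : V x -> agrees_at k u x -> V (padd x (dir i)) ->
  agrees_at k u (padd x (dir i)).
Proof.
  intros Hx [Hm Ht] Hy. assert (E := Ht i Hy). unfold turns_at in E.
  split.
  - rewrite E, Hm, motion_padd_dir. reflexivity.
  - apply (turns_at_all _ k (i + 3)); auto.
    + rewrite padd_dir_opp; auto.
    + unfold turns_at. rewrite padd_dir_opp, E, (dir_congr (i + 3 + k) (i + k + 3)) by lia_mod.
      rewrite padd_dir_opp; reflexivity.
Qed.

Lemma agrees_around_hole k u s i : ~ V s -> agrees_at k u (padd s (dir i)) ->
  forall j, agrees_at k u (padd s (dir j)).
Proof.
  intros Hs H0.
  assert (Hn : forall n : nat, agrees_at k u (padd s (dir (i + Z.of_nat n)))).
  { induction n as [|n IH].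
    - rewrite Z.add_0_r; auto.
    - replace (i + Z.of_nat (S n)) with (i + Z.of_nat n + 1) by lia.
      rewrite <- padd_dir_next. apply agrees_at_nbr; auto.
      + apply V_hole_nbr; auto.
      + rewrite padd_dir_next; apply V_hole_nbr; auto. }
  intro j. rewrite (dir_congr j (i + Z.of_nat (Z.to_nat ((j - i) mod 6)))).
  - apply Hn.
  - rewrite Z2Nat.id by lia_mod. lia_mod.
Qed.

(* Holes are handled through their six neighbours, which are all vertices. *)
Definition agrees_near (k : Z) (u p : pt) : Prop :=
  (V p -> agrees_at k u p) /\ (~ V p -> forall i, agrees_at k u (padd p (dir i))).

Lemma agrees_near_nbr k u p j : agrees_near k u p -> agrees_near k u (padd p (dir j)).
Proof.
  intros [G1 G2]. destruct (V_dec p) as [Hp|Hp].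
  - specialize (G1 Hp). destruct (V_dec (padd p (dir j))) as [Hq|Hq].
    + split; [intros _; apply agrees_at_nbr; auto | intro; contradiction].
    + split; [intro; contradiction | intros _].
      apply (agrees_around_hole k u _ (j + 3)); auto. rewrite padd_dir_opp; auto.
  - assert (Hq : V (padd p (dir j))) by (apply V_hole_nbr; auto).
    split; [intros _; apply G2; auto | intro; contradiction].
Qed.

Lemma agrees_near_nbr_inv k u p j : agrees_near k u (padd p (dir j)) -> agrees_near k u p.
Proof. intro H. rewrite <- (padd_dir_opp p j). apply agrees_near_nbr; auto. Qed.

Lemma agrees_near_everywhere k u p0 : agrees_near k u p0 ->
  forall a b, agrees_near k u (padd p0 (a, b)).
Proof.
  intros H0.
  assert (step0 : forall a b, padd p0 (Z.succ a, b) = padd (padd p0 (a, b)) (dir 0))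
    by (intros a b; destruct p0; unfold padd, dir; simpl; f_equal; lia).
  assert (step1 : forall a b, padd p0 (a, Z.succ b) = padd (padd p0 (a, b)) (dir 1))
    by (intros a b; destruct p0; unfold padd, dir; simpl; f_equal; lia).
  assert (HA : forall a, agrees_near k u (padd p0 (a, 0))).
  { apply Z.peano_ind.
    - replace (padd p0 (0, 0)) with p0 by (destruct p0; unfold padd; simpl; f_equal; lia); auto.
    - intros a IH. rewrite step0. apply agrees_near_nbr; auto.
    - intros a IH. apply (agrees_near_nbr_inv _ _ _ 0).
      rewrite <- step0, Z.succ_pred; auto. }
  intro a. apply Z.peano_ind; auto.
  - intros b IH. rewrite step1. apply agrees_near_nbr; auto.
  - intros b IH. apply (agrees_near_nbr_inv _ _ _ 1).
    rewrite <- step1, Z.succ_pred; auto.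
Qed.

Lemma aut_is_motion : exists k u, forall x, V x -> g x = motion k u x.
Proof.
  assert (Hb : V (2,0)) by V_nbr.
  assert (Hb1 : V (padd (2,0) (dir 0))) by V_nbr.
  destruct (aut_turns_at _ 0 Hb Hb1) as [k Hk].
  set (u := psub (g (2,0)) (rot k (2,0))).
  assert (Hagree : agrees_near k u (2,0)).
  { split; [intros _ | intros Hn; contradiction]. split.
    - unfold motion, u. destruct (g (2,0)), (rot k (2,0)); unfold padd, psub; simpl; f_equal; lia.
    - apply (turns_at_all _ k 0); auto. }
  exists k, u. intros [x1 x2] Hx.
  destruct (agrees_near_everywhere k u _ Hagree (x1 - 2) (x2 - 0)) as [G _].
  replace (padd (2,0) (x1 - 2, x2 - 0)) with (x1, x2) in G by (unfold padd; cbn [fst snd]; f_equal; lia).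
  apply G; auto.
Qed.

End OrientedAut.

(** * A free rigid motion is a translation *)

Section FreeMotion.

Variable g : pt -> pt.
Hypothesis Hg : OrientedAutK g.
Variables (k : Z) (u : pt).
Hypothesis g_motion : forall x, V x -> g x = motion k u x.
Hypothesis free_vertex : forall x, V x -> g x = x -> id_on_V g.
Hypothesis free_edge : forall x y, edge x y ->
  (g x = x /\ g y = y) \/ (g x = y /\ g y = x) -> id_on_V g.
Hypothesis free_face : forall l, face l -> same_set (map g l) l -> id_on_V g.

(* A fixed point of the motion is a vertex or the centre of a hexagon. *)
Lemma motion_fixed_point c : motion k u c = c -> id_on_V g.
Proof.
  intros Hc. destruct (V_dec c) as [Vc|Vc].
  - apply (free_vertex c); auto. rewrite g_motion; auto.
  - apply (free_face (map (padd c) dirs)); [right; right; exists c; auto|].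
    intro z. rewrite in_map_iff, in_hexagon. split.
    + intros [t [<- Ht]]. apply in_hexagon in Ht as [j ->].
      rewrite g_motion by (apply V_hole_nbr; auto). rewrite motion_padd_dir, Hc. eauto.
    + intros [j ->]. exists (padd c (dir (j - k))). split.
      * rewrite g_motion by (apply V_hole_nbr; auto). rewrite motion_padd_dir, Hc.
        f_equal. apply dir_congr. lia_mod.
      * apply in_hexagon. eauto.
Qed.

(* A half-turn about the midpoint of a unit segment swaps its ends. *)
Lemma motion_swaps_segment A j : k mod 6 = 3 -> motion k u A = padd A (dir j) -> id_on_V g.
Proof.
  intros Hk HA.
  assert (HB : motion k u (padd A (dir j)) = A).
  { rewrite motion_padd_dir, HA, (dir_congr (j + k) (j + 3)) by lia_mod. apply padd_dir_opp. }
  destruct (V_dec A) as [VA|VA].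
  - destruct (V_dec (padd A (dir j))) as [VB|VB].
    + apply (free_edge A (padd A (dir j))).
      * split; [|split]; auto. rewrite psub_padd. apply dir_in_dirs.
      * right. rewrite !g_motion by auto. auto.
    + exfalso. apply VB. rewrite <- HA, <- g_motion by auto. apply (aut_V g Hg); auto.
  - exfalso. assert (VB : V (padd A (dir j))) by (apply V_hole_nbr; auto).
    apply VA. rewrite <- HB, <- g_motion by auto. apply (aut_V g Hg); auto.
Qed.

(* A third-turn about the centre of a unit triangle permutes its corners cyclically. *)
Lemma motion_third_turn P i :
  (k mod 6 = 2 /\ motion k u P = padd P (dir i)) \/
  (k mod 6 = 4 /\ motion k u P = padd P (dir (i + 1))) -> id_on_V g.
Proof.
  intros Hk.
  assert (Hc : (motion k u P = padd P (dir i) /\ motion k u (padd P (dir i)) = padd P (dir (i + 1)) /\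
                motion k u (padd P (dir (i + 1))) = P) \/
               (motion k u P = padd P (dir (i + 1)) /\
                motion k u (padd P (dir (i + 1))) = padd P (dir i) /\
                motion k u (padd P (dir i)) = P)).
  { rewrite !motion_padd_dir.
    destruct Hk as [[Hk E]|[Hk E]]; rewrite E; [left|right]; (split; [reflexivity|split]).
    - rewrite (dir_congr (i + k) (i + 2)) by lia_mod. apply padd_dir_next.
    - rewrite (dir_congr (i + 1 + k) (i + 3)) by lia_mod. apply padd_dir_opp.
    - rewrite (dir_congr (i + 1 + k) (i + 5)) by lia_mod. apply padd_dir_prev.
    - rewrite (dir_congr (i + k) (i + 1 + 3)) by lia_mod. apply padd_dir_opp. }
  assert (A12 : padd P (dir (i + 1)) = padd (padd P (dir i)) (dir (i + 2)))
    by (rewrite padd_dir_next; auto).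
  assert (Vimg : forall x, V x -> V (motion k u x))
    by (intros x Hx; rewrite <- g_motion by auto; apply (aut_V g Hg); auto).
  destruct (V_dec P) as [V0|V0].
  - destruct (V_dec (padd P (dir i))) as [V1|V1].
    + destruct (V_dec (padd P (dir (i + 1)))) as [V2|V2].
      * destruct (tri_face P i V0 V1 V2) as [A [B [C [Hf [_ Hcy]]]]].
        apply (free_face _ Hf). intro z.
        destruct Hcy as [[-> [-> ->]]|[[-> [-> ->]]|[-> [-> ->]]]]; simpl;
        rewrite (g_motion P V0), (g_motion _ V1), (g_motion _ V2);
        destruct Hc as [[-> [-> ->]]|[-> [-> ->]]]; tauto.
      * exfalso. apply Vimg in V0, V1. destruct Hc as [[_ [E _]]|[E _]]; rewrite E in *; auto.
    + exfalso. assert (V2 : V (padd P (dir (i + 1)))) by (rewrite A12; apply V_hole_nbr; auto).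
      apply Vimg in V0, V2. destruct Hc as [[E _]|[_ [E _]]]; rewrite E in *; auto.
  - exfalso. assert (V1 : V (padd P (dir i))) by (apply V_hole_nbr; auto).
    assert (V2 : V (padd P (dir (i + 1)))) by (apply V_hole_nbr; auto).
    apply Vimg in V1, V2. destruct Hc as [[_ [_ E]]|[_ [_ E]]]; rewrite E in *; auto.
Qed.

Ltac solve_motion Eu Hk :=
  rewrite Eu; unfold motion, rot, padd; rewrite Hk; unfold dir; simpl; f_equal; lia_mod.

(* Every nontrivial rotation of the lattice has its centre at a lattice point, at the centre
   of a unit triangle (third-turns) or at the midpoint of a unit segment (half-turns). *)
Lemma free_motion_is_translation : exists v, forall x, V x -> g x = padd x v.
Proof.
  assert (trivial : id_on_V g -> exists v, forall x, V x -> g x = padd x v).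
  { intro H. exists (0,0). intros [x1 x2] Hx. rewrite H by auto. unfold padd; simpl; f_equal; lia. }
  case_eq u; intros u1 u2 Eu.
  destruct (mod6_cases k) as [Hk|[Hk|[Hk|[Hk|[Hk|Hk]]]]]; [|apply trivial..].
  - exists u. intros [x1 x2] Hx. rewrite g_motion by auto. unfold motion, rot. rewrite Hk. reflexivity.
  - apply (motion_fixed_point (-u2, u1 + u2)). solve_motion Eu Hk.
  - set (q := (u1 - u2) / 3).
    assert (Hr : (u1 - u2) mod 3 = 0 \/ (u1 - u2) mod 3 = 1 \/ (u1 - u2) mod 3 = 2) by lia_mod.
    destruct Hr as [Hr|[Hr|Hr]].
    + apply (motion_fixed_point (q, u2 + q)). solve_motion Eu Hk.
    + apply (motion_third_turn (q, q + u2) 0). left. split; auto. solve_motion Eu Hk.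
    + apply (motion_third_turn (q, q + u2 + 1) 5). left. split; auto. solve_motion Eu Hk.
  - assert (Hr : (u1 mod 2 = 0 \/ u1 mod 2 = 1) /\ (u2 mod 2 = 0 \/ u2 mod 2 = 1)) by lia_mod.
    destruct Hr as [[H1|H1] [H2|H2]].
    + apply (motion_fixed_point (u1 / 2, u2 / 2)). solve_motion Eu Hk.
    + apply (motion_swaps_segment (u1 / 2, u2 / 2) 1); auto. solve_motion Eu Hk.
    + apply (motion_swaps_segment (u1 / 2, u2 / 2) 0); auto. solve_motion Eu Hk.
    + apply (motion_swaps_segment (u1 / 2 + 1, u2 / 2) 2); auto. solve_motion Eu Hk.
  - set (q := (u1 - u2) / 3).
    assert (Hr : (u1 - u2) mod 3 = 0 \/ (u1 - u2) mod 3 = 1 \/ (u1 - u2) mod 3 = 2) by lia_mod.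
    destruct Hr as [Hr|[Hr|Hr]].
    + apply (motion_fixed_point (u1 - q, - q)). solve_motion Eu Hk.
    + apply (motion_third_turn (u1 - q - 1, - q) 5). right. split; auto. solve_motion Eu Hk.
    + apply (motion_third_turn (u1 - q - 1, - q) 4). right. split; auto. solve_motion Eu Hk.
  - apply (motion_fixed_point (u1 + u2, - u1)). solve_motion Eu Hk.
Qed.

End FreeMotion.

(** * Symmetries of the tiling and their action on the quotient *)

Definition pneg (p : pt) : pt := (- fst p, - snd p).

(* The translation by the hole [w] ([b = true]) or the point reflection [x |-> w - x]. *)
Definition sym (b : bool) (w x : pt) : pt := padd (if b then x else pneg x) w.

Definition sym_turn (b : bool) : Z := if b then 0 else 3.

Lemma sym_padd_dir b w x j : sym b w (padd x (dir j)) = padd (sym b w x) (dir (j + sym_turn b)).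
Proof.
  destruct x, w. unfold sym, sym_turn, pneg.
  destruct b; case_dir j; try case_dir (j + 0); try case_dir (j + 3);
  unfold padd; simpl; f_equal; lia.
Qed.

Lemma sym_V b w x : ~ V w -> V x -> V (sym b w x).
Proof. destruct x, w. unfold V, sym, pneg. destruct b; unfold padd; simpl; intros; lia_mod. Qed.

Lemma sym_hole b w x : ~ V w -> ~ V x -> ~ V (sym b w x).
Proof. destruct x, w. unfold V, sym, pneg. destruct b; unfold padd; simpl; intros; lia_mod. Qed.

Lemma sym_inv b w : ~ V w ->
  exists w', ~ V w' /\ forall x, sym b w' (sym b w x) = x /\ sym b w (sym b w' x) = x.
Proof.
  destruct w as [w1 w2]. unfold V; simpl; intro H. destruct b.
  - exists (-w1, -w2). split; [simpl; lia_mod|].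
    intros [x1 x2]; unfold sym, padd; simpl; split; f_equal; lia.
  - exists (w1, w2). split; [simpl; lia_mod|].
    intros [x1 x2]; unfold sym, padd, pneg; simpl; split; f_equal; lia.
Qed.

Lemma sym_edge b w x y : ~ V w -> edge x y -> edge (sym b w x) (sym b w y).
Proof.
  intros Hw [Hx [Hy Hd]]. split; [apply sym_V; auto|split; [apply sym_V; auto|]].
  destruct (in_dirs_dir _ Hd) as [j Hj].
  rewrite (padd_psub x y), Hj, sym_padd_dir, psub_padd. apply dir_in_dirs.
Qed.

Lemma sym_tri_face b w P i : ~ V w ->
  V P -> V (padd P (dir i)) -> V (padd P (dir (i + 1))) ->
  exists l', face l' /\ same_set (map (sym b w) [P; padd P (dir i); padd P (dir (i + 1))]) l'.
Proof.
  intros Hw H0 H1 H2. simpl map. rewrite !sym_padd_dir.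
  apply (sym_V b w) in H0, H1, H2; auto. rewrite sym_padd_dir in H1, H2.
  rewrite (dir_congr (i + 1 + sym_turn b) (i + sym_turn b + 1)) in * by lia_mod.
  apply tri_face_same_set; auto.
Qed.

Lemma sym_face b w l : ~ V w -> face l -> exists l', face l' /\ same_set (map (sym b w) l) l'.
Proof.
  intros Hw Hf. destruct Hf as [[p [-> HF]]|[[p [-> HF]]|[s [Hs ->]]]].
  - rewrite Forall_forall in HF.
    change [p; padd p (1,0); padd p (0,1)] with [p; padd p (dir 0); padd p (dir (0 + 1))].
    apply sym_tri_face; auto; apply HF; simpl; tauto.
  - rewrite Forall_forall in HF.
    assert (E1 : padd p (1,1) = padd (padd p (1,0)) (dir 1))
      by (destruct p; unfold padd, dir; simpl; f_equal; lia).
    assert (E2 : padd p (0,1) = padd (padd p (1,0)) (dir (1 + 1)))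
      by (destruct p; unfold padd, dir; simpl; f_equal; lia).
    rewrite E1, E2 in *. apply sym_tri_face; auto; apply HF; simpl; tauto.
  - exists (map (padd (sym b w s)) dirs).
    split; [right; right; exists (sym b w s); split; auto; apply sym_hole; auto|].
    intro z. rewrite in_map_iff, in_hexagon. split.
    + intros [t [<- Ht]]. apply in_hexagon in Ht as [j ->]. rewrite sym_padd_dir. eauto.
    + intros [j ->]. exists (padd s (dir (j - sym_turn b))). split.
      * rewrite sym_padd_dir. f_equal. apply dir_congr. lia_mod.
      * apply in_hexagon; eauto.
Qed.

Record TranslationGroup (Gam : (pt -> pt) -> Prop) : Prop := {
  tg_translation : forall g, Gam g -> exists v, forall x, V x -> g x = padd x v;
  tg_inv : forall g, Gam g -> exists h, Gam h /\ forall x, V x -> h (g x) = x /\ g (h x) = x;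
  tg_id : Gam (fun x => x);
  tg_V : forall g, Gam g -> forall x, V x -> V (g x) }.

Section TranslationQuotient.

Variable Gam : (pt -> pt) -> Prop.
Hypothesis HT : TranslationGroup Gam.

(* Translations commute with [sym true w], and [sym false w] conjugates a translation to its
   inverse, which also lies in [Gam]. *)
Lemma equivG_sym b w x y : ~ V w -> V x -> equivG Gam x y -> equivG Gam (sym b w x) (sym b w y).
Proof.
  intros Hw Hx [g [Hg <-]]. destruct (tg_translation Gam HT g Hg) as [v Hv].
  destruct b.
  - exists g. split; auto. rewrite Hv by (apply sym_V; auto). rewrite Hv by auto.
    destruct x, w, v; unfold sym, padd; simpl; f_equal; lia.
  - destruct (tg_inv Gam HT g Hg) as [h [Hh Hhg]].
    destruct (tg_translation Gam HT h Hh) as [v' Hv'].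
    exists h. split; auto.
    assert (E := proj1 (Hhg x Hx)).
    rewrite (Hv' (g x)), Hv in E by (try apply (tg_V Gam HT g); auto).
    rewrite Hv' by (apply sym_V; auto). rewrite Hv by auto.
    destruct x, w, v, v'; unfold sym, padd, pneg in *; simpl in *; inj_pairs; f_equal; lia.
Qed.

Lemma sameX_of_same_set l1 l2 : same_set l1 l2 -> sameX Gam l1 l2.
Proof. intros H z; split; intros [x [Hx Hxz]]; exists x; split; auto; apply H; auto. Qed.

Lemma IsAutX_sym b w : ~ V w -> IsAutX Gam (sym b w).
Proof.
  intro Hw. destruct (sym_inv b w Hw) as [w' [Hw' Hinv]].
  assert (Hid := tg_id Gam HT).
  split; [|split; [|split; [|split; [|split; [|split]]]]].
  - intros; apply sym_V; auto.
  - intros x y Hx Hy; apply equivG_sym; auto.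
  - intros x y Hx Hy H. rewrite <- (proj1 (Hinv x)), <- (proj1 (Hinv y)).
    apply equivG_sym; auto. apply sym_V; auto.
  - intros y Hy. exists (sym b w' y). split; [apply sym_V; auto|].
    rewrite (proj2 (Hinv y)). exists (fun x => x); auto.
  - intros x y Hx Hy. split.
    + intros [x' [y' [Hx' [Hy' He]]]]. exists (sym b w x'), (sym b w y').
      split; [apply equivG_sym; auto|split; [apply equivG_sym; auto|apply sym_edge; auto]].
    + intros [x' [y' [Hx' [Hy' He]]]]. exists (sym b w' x'), (sym b w' y').
      rewrite <- (proj1 (Hinv x)), <- (proj1 (Hinv y)).
      split; [|split; [|apply sym_edge; auto]]; apply equivG_sym; auto; apply sym_V; auto.
  - intros l Hl. destruct (sym_face b w l Hw Hl) as [l' [Hl' Hs]].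
    exists l'. split; auto. apply sameX_of_same_set; auto.
  - intros l' Hl'. destruct (sym_face b w' l' Hw' Hl') as [l [Hl Hs]].
    exists l. split; auto. apply sameX_of_same_set. intro z. rewrite in_map_iff. split.
    + intros [t [<- Ht]]. apply Hs, in_map_iff in Ht as [t' [<- Ht']].
      rewrite (proj2 (Hinv t')). auto.
    + intro Hz. exists (sym b w' z). split; [apply (proj2 (Hinv z))|]. apply Hs, in_map; auto.
Qed.

End TranslationQuotient.

Lemma OrientedAutK_of_group Gam g :
  IsSubgroupAutK Gam -> quotient_is_torus Gam -> Gam g -> OrientedAutK g.
Proof.
  intros [HA _] [_ [Hor _]] Hg. destruct (HA g Hg) as [H1 [H2 [_ [H4 [H5 H6]]]]].
  constructor; auto.
  intros x y He. pose proof He as [Hx [Hy _]]. apply (proj1 (H4 x y Hx Hy)); auto.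
Qed.

(* Orientability makes every element a rotation or translation, and freeness rules out the
   rotations. *)
Lemma TranslationGroup_of_torus_quotient Gam :
  IsSubgroupAutK Gam -> acts_freely Gam -> quotient_is_torus Gam -> TranslationGroup Gam.
Proof.
  intros HS [F_vertex [F_edge F_face]] HQ. pose proof HS as [HA [Hid [_ Hinv]]].
  constructor; auto.
  - intros g Hg. pose proof (OrientedAutK_of_group Gam g HS HQ Hg) as Hgd.
    destruct (aut_is_motion g Hgd) as [k [u Hku]].
    apply (free_motion_is_translation g Hgd k u Hku);
      intros; [eapply F_vertex | eapply F_edge | eapply F_face]; eauto.
  - intros g Hg x Hx. apply (HA g Hg); auto.
Qed.

(* The holes form the lattice [{(i,j) | i = j mod 5}], so translations by holes reduce every
   vertex to [(1,0)], [(2,0)], [(-1,0)] or [(-2,0)], and the reflection [x |-> -x] merges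
   the last two with the first two. *)
Lemma sym_orbit_rep v : V v ->
  exists b w, ~ V w /\ (sym b w (1,0) = v \/ sym b w (2,0) = v).
Proof.
  destruct v as [v1 v2]. unfold V; simpl; intro Hv.
  assert (Hc : (v1 - v2) mod 5 = 1 \/ (v1 - v2) mod 5 = 2 \/ (v1 - v2) mod 5 = 3 \/
               (v1 - v2) mod 5 = 4) by lia_mod.
  destruct Hc as [Hc|[Hc|[Hc|Hc]]].
  - exists true, (v1 - 1, v2). split; [unfold V; simpl; lia_mod|left].
    unfold sym, padd; cbn [fst snd]; f_equal; lia.
  - exists true, (v1 - 2, v2). split; [unfold V; simpl; lia_mod|right].
    unfold sym, padd; cbn [fst snd]; f_equal; lia.
  - exists false, (v1 + 2, v2). split; [unfold V; simpl; lia_mod|right].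
    unfold sym, padd, pneg; cbn [fst snd]; f_equal; lia.
  - exists false, (v1 + 1, v2). split; [unfold V; simpl; lia_mod|left].
    unfold sym, padd, pneg; cbn [fst snd]; f_equal; lia.
Qed.

Theorem theorem1 (Gam : (pt -> pt) -> Prop) :
  IsSubgroupAutK Gam ->
  acts_freely Gam ->
  quotient_is_torus Gam ->
  quotient_is_polyhedral Gam ->
  exists a b c, V a /\ V b /\ V c /\
    forall v, V v -> exists phi, IsAutX Gam phi /\
      (equivG Gam (phi a) v \/ equivG Gam (phi b) v \/ equivG Gam (phi c) v).
Proof.
  intros HS HF HQ _.
  pose proof (TranslationGroup_of_torus_quotient Gam HS HF HQ) as HT.
  assert (Hrefl : forall x, equivG Gam x x) by (intro x; exists (fun y => y); split; auto; apply HT).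
  exists (1,0), (2,0), (2,0).
  split; [|split; [|split]]; try (unfold V; simpl; discriminate).
  intros v Hv. destruct (sym_orbit_rep v Hv) as [b [w [Hw [E|E]]]];
    exists (sym b w); (split; [apply IsAutX_sym; auto|]); rewrite E; auto.
Qed.
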